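(* Let $\mathsf{R}$ be a commutative ring and let $f = \sum_{k=1}^t a_k \mathbf{x}^{\mathbf{e}_k} \in \mathsf{R}[x_1,\ldots,x_n]$ with nonzero $a_k$, pairwise distinct exponent vectors $\mathbf{e}_k\in\mathbb{Z}_{\ge 0}^n$, max degree less than $D$, and $t\le T$. Let $0<\mu<1$ and let $1\le i\le t$ be the index of a term of $f$. Let $\lambda$ be the least prime number with $\lambda \ge T/\mu$. If integers $s_1,\ldots,s_n$ are chosen independently and uniformly at random from $\{0,1,\ldots,\lambda-1\}$, then the probability that the $i$th term of $f$ collides in $f(z^{s_1},\ldots,z^{s_n})$ is less than $\mu$.
   Context: Here $\mathbf{x}^{\mathbf{e}} = x_1^{e_1}\cdots x_n^{e_n}$. ''Max degree less than $D$'' means every variable occurs in $f$ with exponent less than $D$. For $\mathbf{s}=(s_1,\ldots,s_n)$, the $i$th term of $f$ collides in the substitution $f(z^{s_1},\ldots,z^{s_n})$ if there exists $j\neq i$ with $\mathbf{e}_i\cdot\mathbf{s} = \mathbf{e}_j\cdot\mathbf{s}$. *)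

From mathcomp Require Import all_boot all_order all_algebra.
From mathcomp Require Import multinomials.mpoly.
Set Implicit Arguments. Unset Strict Implicit. Unset Printing Implicit Defensive.
Import Order.TTheory GRing.Theory Num.Theory.

(* The exponent of the substitution z |-> (z^{s_1},...,z^{s_n}) applied to x^m,
   i.e. the dot product m . s. *)
Definition subst_exp (n : nat) (m : 'X_{1..n}) (s : 'I_n -> nat) : nat :=
  (\sum_(k < n) m k * s k)%N.

Definition collides (R : comRingType) (n : nat) (f : {mpoly R[n]})
    (m : 'X_{1..n}) (s : 'I_n -> nat) : bool :=
  has (fun m' => (m' != m) && (subst_exp m' s == subst_exp m s)) (msupp f).

Definition least_prime_ge {F : realFieldType} (T : nat) (mu : F) (lam : nat) : Prop :=
  [/\ prime lam, (T%:R / mu <= lam%:R)%R &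
      forall p : nat, prime p -> (T%:R / mu <= p%:R)%R -> (lam <= p)%N].

From mathcomp Require Import all_boot all_order all_algebra.
From mathcomp Require Import multinomials.mpoly.
From mathcomp Require Import zify.
Import Order.TTheory GRing.Theory Num.Theory.

(* Two distinct exponent vectors m' != m differ in some coordinate k, and the
   equation m'.s = m.s is affine in s_k with nonzero slope m'_k - m_k: once the
   other coordinates of s are fixed, at most one value of s_k solves it. Hence
   at most lam^(n-1) of the lam^n vectors s collide m' with m, and a union bound
   over the t - 1 <= T - 1 other terms gives probability at most (T - 1)/lam,
   which is below mu since lam >= T/mu. *)

Lemma addn_mul_root_uniq (a b x y p q : nat) :
  a != b -> a * x + p = b * x + q -> a * y + p = b * y + q -> x = y.
Proof. by move=> /eqP; case: (ltngtP a b) => //; nia. Qed.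

Lemma mnm_neq_coord n (m m' : 'X_{1..n}) : m' != m -> exists k, m' k != m k.
Proof.
move=> neq; apply/existsP; apply: contraNT neq => /existsPn same.
by apply/eqP/mnmP => k; apply/eqP/negPn/same.
Qed.

Lemma subst_exp_split n (m : 'X_{1..n}) (s : 'I_n -> nat) (k : 'I_n) :
  subst_exp m s = m k * s k + \sum_(j < n | j != k) m j * s j.
Proof. by rewrite /subst_exp (bigD1 k). Qed.

Lemma card_has_le (T : finType) (U : Type) (p : T -> U -> bool) (r : seq U) :
  #|[set x | has (p x) r]| <= \sum_(u <- r) #|[set x | p x u]|.
Proof.
elim: r => [|u r IHr]; first by rewrite big_nil leqn0 cards_eq0 -subset0;
  apply/subsetP => x; rewrite inE.
have -> : [set x | has (p x) (u :: r)] = [set x | p x u] :|: [set x | has (p x) r].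
  by apply/setP => x; rewrite !inE.
by rewrite big_cons (leq_trans (leq_card_setU _ _)) ?leq_add2l.
Qed.

Lemma card_ffun_ord n lam : #|{ffun 'I_n -> 'I_lam}| = lam ^ n.
Proof. by rewrite card_ffun !card_ord. Qed.

Section Collisions.

Variables n lam : nat.
Implicit Types (m : 'X_{1..n}) (s : {ffun 'I_n -> 'I_lam}).

Definition subst_exp_eq m m' : {set {ffun 'I_n -> 'I_lam}} :=
  [set s : {ffun 'I_n -> 'I_lam} | subst_exp m' (fun k => nat_of_ord (s k))
             == subst_exp m (fun k => nat_of_ord (s k))].

Lemma subst_exp_eq_coord_uniq m m' (k : 'I_n) s s' :
  m' k != m k -> s \in subst_exp_eq m m' -> s' \in subst_exp_eq m m' ->
  (forall j, j != k -> s j = s' j) -> s = s'.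
Proof.
move=> neq_k; rewrite !inE => /eqP hs /eqP hs' same_off.
have off m0 : \sum_(j < n | j != k) m0 j * s' j = \sum_(j < n | j != k) m0 j * s j.
  by apply: eq_bigr => j /same_off ->.
rewrite !(subst_exp_split _ _ _ k) in hs hs'; rewrite !off in hs'.
apply/ffunP => j; case: (eqVneq j k) => [->|/same_off] //.
by apply: val_inj; apply: addn_mul_root_uniq neq_k hs hs'.
Qed.

Lemma card_subst_exp_eq m m' : m' != m -> #|subst_exp_eq m m'| * lam <= lam ^ n.
Proof.
case/mnm_neq_coord=> k neq_k.
pose reset (sd : {ffun 'I_n -> 'I_lam} * 'I_lam) :=
  [ffun j => if j == k then sd.2 else sd.1 j].
have reset_inj : {in setX (subst_exp_eq m m') setT &, injective reset}.
  move=> [s d] [s' d'] /setXP[hs _] /setXP[hs' _] /ffunP eq_reset.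
  have := eq_reset k; rewrite !ffunE eqxx /= => ->.
  congr pair; apply: subst_exp_eq_coord_uniq neq_k hs hs' _ => j ne_jk.
  by have := eq_reset j; rewrite !ffunE (negbTE ne_jk).
have := card_in_imset reset_inj; rewrite cardsX cardsT card_ord => <-.
by rewrite -[lam ^ n](card_ffun_ord n lam) max_card.
Qed.

Lemma card_collides_le (R : comRingType) (f : {mpoly R[n]}) m :
  m \in msupp f ->
  #|[set s : {ffun 'I_n -> 'I_lam} | collides f m (fun k => nat_of_ord (s k))]| * lam
    <= (size (msupp f)).-1 * lam ^ n.
Proof.
move=> mf; apply: leq_trans (leq_mul (card_has_le _ _ _ _) (leqnn lam)) _.
have term_le m' : #|[set s : {ffun 'I_n -> 'I_lam} | (m' != m) &&
    (subst_exp m' (fun k => nat_of_ord (s k)) == subst_exp m (fun k => nat_of_ord (s k)))]|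
    * lam <= (m' != m) * lam ^ n.
  case: (eqVneq m' m) => [->|ne]; last by rewrite mul1n; apply: card_subst_exp_eq.
  rewrite mul0n leqn0 muln_eq0 cards_eq0 -subset0; apply/orP; left.
  by apply/subsetP => s; rewrite inE eqxx.
have count_other : \sum_(m' <- msupp f) (m' != m) = (size (msupp f)).-1.
  rewrite -(count_predC (pred1 m)) count_uniq_mem ?msupp_uniq ?mf //.
  by rewrite add1n -sum1_count [RHS]big_mkcond.
rewrite big_distrl /= -count_other big_distrl /=.
by apply: leq_sum => m' _; apply: term_le.
Qed.

End Collisions.

Theorem lemma3p3 (R : comRingType) (F : realFieldType) (n D T lam : nat)
    (f : {mpoly R[n]}) (mu : F) (m : 'X_{1..n}) :
  (forall e : 'X_{1..n}, e \in msupp f -> forall k : 'I_n, (e k < D)%N) ->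
  (size (msupp f) <= T)%N ->
  (0 < mu)%R -> (mu < 1)%R ->
  m \in msupp f ->
  least_prime_ge T mu lam ->
  (#|[set s : {ffun 'I_n -> 'I_lam} | collides f m (fun k => nat_of_ord (s k))]|%:R
     / (lam ^ n)%:R < mu)%R.
Proof.
move=> _ le_tT mu_gt0 _ mf [/prime_gt0 lam_gt0 le_Tmu_lam _].
set c := #|_|.
have t_gt0 : (0 < size (msupp f))%N by case: (msupp f) mf.
have lt_c_T : (c * lam < T * lam ^ n)%N.
  apply: leq_ltn_trans (@card_collides_le _ lam _ _ _ mf) _.
  by rewrite ltn_pmul2r ?expn_gt0 ?lam_gt0 // (leq_trans _ le_tT) ?ltn_predL.
have le_T : (T%:R <= lam%:R * mu :> F)%R by rewrite -ler_pdivrMr.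
have lam_gt0R : (0 < lam%:R :> F)%R by rewrite ltr0n.
rewrite ltr_pdivrMr ?ltr0n ?expn_gt0 ?lam_gt0 // -(ltr_pM2r lam_gt0R) -natrM.
rewrite (lt_le_trans (_ : _ < (T * lam ^ n)%:R)%R) ?ltr_nat //.
by rewrite natrM mulrAC ler_pM2r ?ltr0n ?expn_gt0 ?lam_gt0 // mulrC.
Qed.
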